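(* Let $\mathbb{K}$ be a positive commutative monoid that has the transportation property. For every hypergraph $H$, $H$ is acyclic if and only if $H$ has the local-to-global consistency property for $\mathbb{K}$-relations.
   Context: A commutative monoid $\mathbb{K}=(K,+,0)$ is positive if $p+q=0$ implies $p=q=0$; monoids have at least two elements. $\mathbb{K}$ has the transportation property if for all positive integers $m,n$ and $b\in K^m$, $c\in K^n$ with $b_1+\dots+b_m=c_1+\dots+c_n$ there is $(d_{ij})\in K^{m\times n}$ with row sums $b_i$ and column sums $c_j$. Attributes have domains (arbitrary sets, chosen as needed); for a finite attribute set $X$, an $X$-tuple assigns each attribute a value in its domain; $t[Y]$ is restriction. A $\mathbb{K}$-relation over $X$ is a finitely supported function $R$ from $X$-tuples to $K$; marginals $R[Y](t)=\sum_{r:R(r)\ne0,r[Y]=t}R(r)$. A hypergraph with hyperedges $X_1,\dots,X_m$ (vertices as attributes) has the local-to-global consistency property for $\mathbb{K}$-relations if every collection $R_1(X_1),\dots,R_m(X_m)$ that is pairwise consistent (for all $i,j$ some $W$ over $X_i\cup X_j$ has $W[X_i]=R_i,W[X_j]=R_j$) is globally consistent (some $W$ over $\bigcup_i X_i$ has $W[X_i]=R_i$ for all $i$). A hypergraph is acyclic (Beeri–Fagin–Maier–Yannakakis) iff it has a join tree: a tree on its hyperedges such that for each vertex the hyperedges containing it form a connected subtree. *)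

From mathcomp Require Import all_boot all_order all_algebra.
Set Implicit Arguments. Unset Strict Implicit. Unset Printing Implicit Defensive.
Import GRing.Theory.
Local Open Scope ring_scope.

Definition nontrivial_monoid (K : nmodType) : Prop := exists p : K, p != 0.

Definition positive_monoid (K : nmodType) : Prop :=
  forall p q : K, p + q = 0 -> p = 0 /\ q = 0.

Definition transportation_property (K : nmodType) : Prop :=
  forall (m n : nat), (0 < m)%N -> (0 < n)%N ->
  forall (b : 'I_m -> K) (c : 'I_n -> K),
    \sum_(i < m) b i = \sum_(j < n) c j ->
    exists d : 'I_m -> 'I_n -> K,
      (forall i, \sum_(j < n) d i j = b i) /\ (forall j, \sum_(i < m) d i j = c j).

Section Relations.
Variables (A : finType) (Dom : A -> eqType).

(* A tuple is a partial assignment: [t a = Some v] with [v] in the domain of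
   [a]; an X-tuple is one defined exactly on the attributes of X. *)
Definition tup := {dffun forall a : A, option (Dom a)}.

Definition is_tuple_over (X : {set A}) (t : tup) : Prop :=
  forall a, (t a != None) = (a \in X).

Definition restr (Y : {set A}) (t : tup) : tup :=
  [ffun a => if a \in Y then t a else None].

Variable K : nmodType.

Definition Krel (X : {set A}) (R : tup -> K) : Prop :=
  (exists s : seq tup, forall t, R t != 0 -> t \in s) /\
  (forall t, R t != 0 -> is_tuple_over X t).

(* W[Y] = R, where the marginal W[Y](t) = sum of W(r) over the support
   elements r of W with r[Y] = t (computed over any duplicate-free list
   covering the support; extra elements contribute 0). *)
Definition marginal_is (W : tup -> K) (Y : {set A}) (R : tup -> K) : Prop :=
  forall s : seq tup, (forall r, W r != 0 -> r \in s) ->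
  forall t, R t = \sum_(r <- undup s | restr Y r == t) W r.

End Relations.

(* trees on 'I_m : symmetric irreflexive, connected, and every edge is a
   bridge (i.e. minimally connected) *)
Definition is_tree (m : nat) (e : rel 'I_m) : Prop :=
  symmetric e /\ irreflexive e /\
  (forall i j : 'I_m, connect e i j) /\
  (forall i j : 'I_m, e i j ->
     ~~ connect (fun x y => e x y && ~~ (((x == i) && (y == j)) || ((x == j) && (y == i)))) i j).

Definition join_tree (A : finType) (m : nat) (X : 'I_m -> {set A}) (e : rel 'I_m)
  : Prop :=
  is_tree e /\
  forall v : A, forall i j : 'I_m, v \in X i -> v \in X j ->
    connect (fun x y => [&& e x y, v \in X x & v \in X y]) i j.

Definition acyclic (A : finType) (m : nat) (X : 'I_m -> {set A}) : Prop :=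
  exists e : rel 'I_m, join_tree X e.

Definition pairwise_consistent (A : finType) (Dom : A -> eqType) (K : nmodType)
  (m : nat) (X : 'I_m -> {set A}) (R : 'I_m -> tup Dom -> K) : Prop :=
  forall i j : 'I_m, exists W : tup Dom -> K,
    Krel (X i :|: X j) W /\ marginal_is W (X i) (R i) /\ marginal_is W (X j) (R j).

Definition globally_consistent (A : finType) (Dom : A -> eqType) (K : nmodType)
  (m : nat) (X : 'I_m -> {set A}) (R : 'I_m -> tup Dom -> K) : Prop :=
  exists W : tup Dom -> K,
    Krel (\bigcup_(i < m) X i) W /\ forall i, marginal_is W (X i) (R i).

Definition local_to_global (K : nmodType) (A : finType) (m : nat)
  (X : 'I_m -> {set A}) : Prop :=
  forall (Dom : A -> eqType) (R : 'I_m -> tup Dom -> K),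
    (forall i, Krel (X i) (R i)) ->
    pairwise_consistent X R -> globally_consistent X R.

(* If the hypergraph has a join tree, add its hyperedges one at a time along tree edges.
   By the running-intersection property a new hyperedge meets the union of the previous
   ones exactly in its intersection with its tree neighbour, on which pairwise consistency
   makes the two marginals agree; two relations with a common marginal are then glued by
   choosing, above every tuple of the intersection, a transportation plan between the two
   fibers (positivity handles empty fibers).

   Otherwise GYO reduction gets stuck on a core (S, V). Over Z_q with q = m! + 1, give each
   hyperedge of S a linear equation in the vertices of V, with coefficients summing to zero
   over S on every vertex and right-hand sides summing to 1, and let each relation weigh
   every (projected) solution by a fixed p <> 0. Each hyperedge of S has a vertex of V
   outside any other, whose value is free on the common attributes of two relations; so
   both marginals there count 1/q of all extensions, and the relations are pairwise
   consistent. A global witness would solve all equations at once, giving 0 = 1. *)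

From mathcomp Require Import all_boot all_order all_algebra zify.
From Stdlib Require Import ClassicalEpsilon.
Set Implicit Arguments. Unset Strict Implicit. Unset Printing Implicit Defensive.
Import GRing.Theory.
Local Open Scope ring_scope.

Lemma positive_sum_eq0 (K : nmodType) (I : eqType) (l : seq I) (P : pred I) (F : I -> K) :
  positive_monoid K -> \sum_(i <- l | P i) F i = 0 -> forall i, i \in l -> P i -> F i = 0.
Proof.
move=> posK; elim: l => [|x l IHl] //; rewrite big_cons => sum0 i.
rewrite inE => /orP[/eqP->|il] Pi.
  by rewrite Pi in sum0; case: (posK _ _ sum0).
by apply: IHl il Pi; case: (P x) sum0 => // /posK[].
Qed.

Lemma positive_natmul_eq0 (K : nmodType) (p : K) n :
  positive_monoid K -> p != 0 -> p *+ n = 0 -> n = 0%N.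
Proof. by move=> posK pnz; case: n => // n; rewrite mulrS => /posK[p0]; rewrite p0 eqxx in pnz. Qed.

Lemma big_support_eq (K : nmodType) (I : eqType) (l1 l2 : seq I) (F : I -> K) :
  uniq l1 -> uniq l2 -> (forall t, F t != 0 -> (t \in l1) && (t \in l2)) ->
  \sum_(t <- l1) F t = \sum_(t <- l2) F t.
Proof.
move=> u1 u2 supp.
have drop0 l : \sum_(t <- l) F t = \sum_(t <- l | F t != 0) F t.
  by rewrite [RHS]big_mkcond; apply: eq_bigr => t _; case: eqP.
rewrite drop0 [RHS]drop0 -big_filter -[RHS]big_filter.
apply: perm_big; apply: uniq_perm; rewrite ?filter_uniq // => t.
by rewrite !mem_filter; case: (boolP (F t != 0)) => // /supp/andP[-> ->].
Qed.

Lemma big_neq0_witness (K : nmodType) (I : eqType) (l : seq I) (P : pred I) (F : I -> K) :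
  \sum_(r <- l | P r) F r != 0 -> exists2 r, r \in l & P r && (F r != 0).
Proof.
move=> nz; apply/hasP; apply: contra_neqT nz => /hasPn F0.
by rewrite big1_seq // => r /andP[Pr /F0]; rewrite Pr => /negPn/eqP.
Qed.

(* An empty side is allowed: positivity forces the other side to vanish, and the
   zero plan works. *)
Lemma transport_seq (K : nmodType) (I J : eqType) (lb : seq I) (lc : seq J)
    (f : I -> K) (g : J -> K) :
  positive_monoid K -> transportation_property K -> uniq lb -> uniq lc ->
  \sum_(i <- lb) f i = \sum_(j <- lc) g j ->
  exists d : I -> J -> K,
    (forall i, i \in lb -> \sum_(j <- lc) d i j = f i) /\
    (forall j, j \in lc -> \sum_(i <- lb) d i j = g j).
Proof.
move=> posK trK ub uc sum_eq.
case: lb ub sum_eq => [|i0 lb'] ub sum_eq.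
  rewrite big_nil in sum_eq; exists (fun _ _ => 0); split=> // j jc.
  by rewrite big_nil (positive_sum_eq0 posK (esym sum_eq)).
case: lc uc sum_eq => [|j0 lc'] uc sum_eq.
  rewrite big_nil in sum_eq; exists (fun _ _ => 0); split=> // i ib.
  by rewrite big_nil (positive_sum_eq0 posK sum_eq).
set lb := i0 :: lb' in ub sum_eq *; set lc := j0 :: lc' in uc sum_eq *.
have sum_nth : \sum_(a < size lb) f (nth i0 lb a) = \sum_(b < size lc) g (nth j0 lc b).
  by rewrite -(big_mkord xpredT (fun a => f (nth i0 lb a))) -(big_nth i0 xpredT f)
     -(big_mkord xpredT (fun b => g (nth j0 lc b))) -(big_nth j0 xpredT g).
have [d [rows cols]] := trK (size lb) (size lc) isT isT _ _ sum_nth.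
exists (fun i j => if insub (index i lb) is Some a then
                   if insub (index j lc) is Some b then d a b else 0 else 0).
split=> [i ib | j jc].
  have ilt : (index i lb < size lb)%N by rewrite index_mem.
  have -> : insub (index i lb) = Some (Ordinal ilt) by exact: valK (Ordinal ilt).
  rewrite -[f i](congr1 f (nth_index i0 ib)) -(rows (Ordinal ilt)).
  rewrite (big_nth j0) big_mkord; apply: eq_bigr => b _.
  by rewrite index_uniq // valK.
have jlt : (index j lc < size lc)%N by rewrite index_mem.
rewrite -[g j](congr1 g (nth_index j0 jc)) -(cols (Ordinal jlt)).
rewrite (big_nth i0) big_mkord; apply: eq_bigr => a _.
have -> : insub (index j lc) = Some (Ordinal jlt) by exact: valK (Ordinal jlt).
by rewrite index_uniq // valK.
Qed.

Section Marginals.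
Variables (A : finType) (Dom : A -> eqType) (K : nmodType).
Local Notation T := (tup Dom).

Definition supported_on (W : T -> K) (s : seq T) := forall r, W r != 0 -> r \in s.

Lemma restrE (Y : {set A}) (t : T) a : restr Y t a = if a \in Y then t a else None.
Proof. by rewrite ffunE. Qed.

Lemma restrI (Y Z : {set A}) (t : T) : restr Z (restr Y t) = restr (Z :&: Y) t.
Proof. by apply/ffunP=> a; rewrite !restrE inE; case: (a \in Z). Qed.

Lemma restrS (Y Z : {set A}) (t : T) : Z \subset Y -> restr Z (restr Y t) = restr Z t.
Proof. by move=> sZY; rewrite restrI (setIidPl sZY). Qed.

Lemma restr_tuple_over (X Y : {set A}) (t : T) :
  is_tuple_over X t -> is_tuple_over (X :&: Y) (restr Y t).
Proof. by move=> tX a; rewrite restrE !inE; case: (a \in Y); rewrite ?andbT ?andbF ?tX. Qed.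

Lemma restr_id (X : {set A}) (t : T) : is_tuple_over X t -> restr X t = t.
Proof. by move=> tX; apply/ffunP=> a; rewrite restrE -tX; case: (t a). Qed.

Definition tuple_overb (X : {set A}) (t : T) := [forall a, (t a != None) == (a \in X)].

Lemma tuple_overbP X t : reflect (is_tuple_over X t) (tuple_overb X t).
Proof. by apply: (iffP forallP) => tX a; [exact: eqP (tX a) | rewrite tX]. Qed.

Definition marg (W : T -> K) (s : seq T) (Y : {set A}) (t : T) :=
  \sum_(r <- undup s | restr Y r == t) W r.

Lemma marg_supported_eq (W : T -> K) s s' Y t : supported_on W s -> supported_on W s' ->
  marg W s Y t = marg W s' Y t.
Proof.
move=> sW s'W; rewrite /marg !(big_mkcond (fun r => restr Y r == t)).
apply: big_support_eq; rewrite ?undup_uniq // => r.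
case: (restr Y r == t) => Wr; last by rewrite eqxx in Wr.
by rewrite !mem_undup (sW _ Wr) (s'W _ Wr).
Qed.

Lemma marginal_isP (W : T -> K) s Y R : supported_on W s ->
  marginal_is W Y R <-> (forall t, R t = marg W s Y t).
Proof.
move=> sW; split=> [margR t | margR s' s'W t]; first exact: margR.
by rewrite margR (marg_supported_eq _ _ sW s'W).
Qed.

Lemma marg_supported (W : T -> K) s Y : supported_on W s ->
  supported_on (marg W s Y) (map (restr Y) s).
Proof.
move=> sW t /big_neq0_witness[r rs /andP[/eqP <- _]].
by apply: map_f; rewrite -mem_undup.
Qed.

Lemma Krel_supported X (W : T -> K) : Krel X W -> exists s, supported_on W s.
Proof. by case. Qed.

Lemma marginal_exists X (W : T -> K) Y : Krel X W ->
  exists M, Krel (X :&: Y) M /\ marginal_is W Y M.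
Proof.
move=> [[s sW] WX]; exists (marg W s Y); split; last exact/(marginal_isP _ _ sW).
split; first by exists (map (restr Y) s); apply: marg_supported.
move=> t /big_neq0_witness[r _ /andP[/eqP <- /WX]]; exact: restr_tuple_over.
Qed.

Lemma marginal_is_eq (W : T -> K) Y M M' : (exists s, supported_on W s) ->
  marginal_is W Y M -> marginal_is W Y M' -> M =1 M'.
Proof. by move=> [s sW] /(marginal_isP _ _ sW) + /(marginal_isP _ _ sW) + t => -> ->. Qed.

Lemma eq_marginal_isr (W : T -> K) Y M M' : M =1 M' -> marginal_is W Y M -> marginal_is W Y M'.
Proof. by move=> eqM margM s sW t; rewrite -eqM (margM s sW). Qed.

Lemma eq_marginal_isl (W W' : T -> K) Y M :
  W =1 W' -> marginal_is W Y M -> marginal_is W' Y M.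
Proof.
move=> eqW margM s sW' t.
have sW : supported_on W s by move=> r; rewrite eqW => /sW'.
by rewrite (margM s sW); apply: eq_bigr => r _; rewrite eqW.
Qed.

Lemma marginal_is_trans (W : T -> K) s (Y Z : {set A}) R M : supported_on W s ->
  Z \subset Y -> marginal_is W Y R -> marginal_is R Z M -> marginal_is W Z M.
Proof.
move=> sW sZY /(marginal_isP _ _ sW) margR.
have sR : supported_on R (map (restr Y) s).
  by move=> t; rewrite margR; apply: marg_supported.
move/(marginal_isP _ _ sR) => margM; apply/(marginal_isP _ _ sW) => t.
rewrite margM /marg; under eq_bigr => u _ do rewrite margR /marg big_mkcond /=.
rewrite exchange_big /= [RHS]big_mkcond; apply: eq_big_seq => r rs /=.
rewrite big_mkcond (bigD1_seq (restr Y r)) ?undup_uniq //=; last first.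
  by rewrite mem_undup map_f // -mem_undup.
rewrite eqxx restrS // big1 ?addr0 // => u /negPf neq.
by case: ifP => // _; rewrite eq_sym neq.
Qed.

Lemma marginal_is_self (X : {set A}) (W : T -> K) : Krel X W -> marginal_is W X W.
Proof.
move=> [[s sW] WX]; apply/(marginal_isP _ _ sW) => t; rewrite /marg.
have -> : \sum_(r <- undup s | restr X r == t) W r = \sum_(r <- undup s | r == t) W r.
  rewrite !(big_mkcond (fun r => _ == t)); apply: eq_bigr => r _.
  by case: (eqVneq (W r) 0) => [-> | /WX/restr_id ->]; rewrite ?if_same.
case: (eqVneq (W t) 0) => [W0 | /sW ts].
  by rewrite W0 big1_seq // => r /andP[/eqP-> _].
by rewrite -big_filter filter_pred1_uniq ?undup_uniq ?mem_undup // big_seq1.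
Qed.

End Marginals.

Section Gluing.
Variables (A : finType) (Dom : A -> eqType) (K : nmodType).
Local Notation T := (tup Dom).

Definition join_tuple (Y1 : {set A}) (r1 r2 : T) : T :=
  [ffun a => if a \in Y1 then r1 a else r2 a].

Lemma join_restrl (Y1 : {set A}) (r1 r2 : T) :
  is_tuple_over Y1 r1 -> restr Y1 (join_tuple Y1 r1 r2) = r1.
Proof.
move=> r1Y1; apply/ffunP => a; rewrite restrE ffunE.
by case: ifP => // aY1; move: (r1Y1 a); rewrite aY1; case: (r1 a).
Qed.

Lemma join_restrr (Y1 Y2 : {set A}) (r1 r2 : T) : is_tuple_over Y2 r2 ->
  restr (Y1 :&: Y2) r1 = restr (Y1 :&: Y2) r2 -> restr Y2 (join_tuple Y1 r1 r2) = r2.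
Proof.
move=> r2Y2 agree; apply/ffunP => a; rewrite restrE ffunE.
case: ifP => aY2; last by move: (r2Y2 a); rewrite aY2; case: (r2 a).
case: ifP => // aY1.
by have := congr1 (fun t : T => t a) agree; rewrite !restrE inE aY1 aY2.
Qed.

Lemma join_restrS (Y1 Z : {set A}) (r1 r2 : T) :
  Z \subset Y1 -> restr Z (join_tuple Y1 r1 r2) = restr Z r1.
Proof.
by move=> sZY1; apply/ffunP => a; rewrite !restrE ffunE; case: ifP => // /(subsetP sZY1) ->.
Qed.

Lemma join_tuple_over (Y1 Y2 : {set A}) (r1 r2 : T) : is_tuple_over Y1 r1 ->
  is_tuple_over Y2 r2 -> is_tuple_over (Y1 :|: Y2) (join_tuple Y1 r1 r2).
Proof. by move=> r1Y1 r2Y2 a; rewrite ffunE inE; case: ifP => aY1; rewrite ?r1Y1 ?r2Y2. Qed.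

Lemma restr_join (Y1 Y2 : {set A}) (t : T) : is_tuple_over (Y1 :|: Y2) t ->
  join_tuple Y1 (restr Y1 t) (restr Y2 t) = t.
Proof.
move=> tY; apply/ffunP => a; rewrite ffunE !restrE.
case aY1: (a \in Y1) => //; case aY2: (a \in Y2) => //.
by move: (tY a); rewrite inE aY1 aY2; case: (t a).
Qed.

Definition fiber (W : T -> K) (s : seq T) (Z : {set A}) (u : T) :=
  [seq r <- undup s | (restr Z r == u) && (W r != 0)].

Lemma mem_fiber (W : T -> K) s Z u r :
  r \in fiber W s Z u -> [/\ r \in s, restr Z r = u & W r != 0].
Proof. by rewrite mem_filter mem_undup => /andP[/andP[/eqP]]. Qed.

Lemma sum_fiber (W : T -> K) s Z u : \sum_(r <- fiber W s Z u) W r = marg W s Z u.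
Proof.
rewrite big_filter /marg [LHS]big_mkcond [RHS]big_mkcond; apply: eq_bigr => r _.
by case: (restr Z r == u) => //=; case: eqP.
Qed.

(* [glued Y1 Y2 B C D] puts mass [D u r1 r2] on the join of [r1 \in B u] and
   [r2 \in C u], where [B u] and [C u] are the tuples lying above [u] on [Y1 :&: Y2]. *)
Definition glued (Y1 Y2 : {set A}) (B C : T -> seq T) (D : T -> T -> T -> K) (t : T) : K :=
  let u := restr (Y1 :&: Y2) t in
  if [&& tuple_overb (Y1 :|: Y2) t, restr Y1 t \in B u & restr Y2 t \in C u]
  then D u (restr Y1 t) (restr Y2 t) else 0.

Lemma glued_sym Y1 Y2 B C D :
  glued Y2 Y1 C B (fun u r2 r1 => D u r1 r2) =1 glued Y1 Y2 B C D.
Proof.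
move=> t; rewrite /glued setUC setIC.
by case: (tuple_overb _ t); case: (_ \in B _); case: (_ \in C _).
Qed.

Lemma glued_neq0 Y1 Y2 B C D t : glued Y1 Y2 B C D t != 0 ->
  let u := restr (Y1 :&: Y2) t in
  [/\ is_tuple_over (Y1 :|: Y2) t, restr Y1 t \in B u & restr Y2 t \in C u].
Proof. by rewrite /glued; case: ifP => [/and3P[/tuple_overbP] | _]; rewrite ?eqxx. Qed.

Lemma glued_supported Y1 Y2 B C D (s1 s2 : seq T) :
  (forall u, {subset B u <= s1}) -> (forall u, {subset C u <= s2}) ->
  supported_on (glued Y1 Y2 B C D) [seq join_tuple Y1 r1 r2 | r1 <- s1, r2 <- s2].
Proof.
move=> sB sC t /glued_neq0[tY /sB r1s /sC r2s].
by rewrite -(restr_join tY) allpairs_f.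
Qed.

Section GluedMarginal.
Variables (Y1 Y2 : {set A}) (W1 : T -> K) (s1 s2 : seq T) (B C : T -> seq T).
Variable D : T -> T -> T -> K.
Let Z := Y1 :&: Y2.
Hypotheses (memB : forall u r, r \in B u -> [/\ r \in s1, restr Z r = u & is_tuple_over Y1 r])
           (memC : forall u r, r \in C u -> [/\ r \in s2, restr Z r = u & is_tuple_over Y2 r]).
Hypotheses (uniqC : forall u, uniq (C u)) (suppB : forall r, W1 r != 0 -> r \in B (restr Z r)).
Hypothesis rowsD : forall u r1, r1 \in B u -> \sum_(r2 <- C u) D u r1 r2 = W1 r1.

Lemma glued_marginal : marginal_is (glued Y1 Y2 B C D) Y1 W1.
Proof.
have sB u : {subset B u <= s1} by move=> r /memB[].
have sC u : {subset C u <= s2} by move=> r /memC[].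
have sG := @glued_supported Y1 Y2 B C D s1 s2 sB sC.
have sZY1 : Z \subset Y1 by apply: subsetIl.
apply/(marginal_isP _ _ sG) => r1; rewrite /marg; set u := restr Z r1.
have [r1B | r1nB] := boolP (r1 \in B u); last first.
  rewrite big1 => [|t /eqP r1E]; first by apply/eqP; apply: contraNT r1nB => /suppB.
  apply/eqP; apply: contraNT r1nB => /glued_neq0[_ + _].
  by rewrite /u -r1E restrS.
have [r1s r1u r1Y1] := memB r1B.
rewrite big_mkcond (big_support_eq (l2 := map (join_tuple Y1 r1) (C u))) ?undup_uniq //.
- rewrite big_map -(rowsD r1B); apply: eq_big_seq => r2 r2C.
  have [_ r2u r2Y2] := memC r2C.
  have agree : restr Z r1 = restr Z r2 by rewrite r2u.
  rewrite /glued (join_restrl r2 r1Y1) eqxx (join_restrS _ _ sZY1) (join_restrr r2Y2 agree).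
  rewrite -/u r1B r2C.
  by rewrite (introT (tuple_overbP _ _) (join_tuple_over r1Y1 r2Y2)).
- rewrite map_inj_in_uniq // => x y /memC[_ xu xY2] /memC[_ yu yY2] /(congr1 (restr Y2)).
  by rewrite (join_restrr xY2) ?(join_restrr yY2) ?xu ?yu.
- move=> t; case: (restr Y1 t =P r1) => [r1E|_]; last by rewrite eqxx.
  move=> /[dup] /sG ts /glued_neq0[tY _ tC]; rewrite mem_undup ts -(restr_join tY) r1E map_f //.
  by move: tC; rewrite /u -r1E restrS.
Qed.

End GluedMarginal.

(* For each tuple [u] over [Y1 :&: Y2], a transportation plan couples the fibers of
   [W1] and [W2] above [u]. *)
Lemma glue (Y1 Y2 : {set A}) (W1 W2 M : T -> K) :
  positive_monoid K -> transportation_property K -> Krel Y1 W1 -> Krel Y2 W2 ->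
  marginal_is W1 (Y1 :&: Y2) M -> marginal_is W2 (Y1 :&: Y2) M ->
  exists W, Krel (Y1 :|: Y2) W /\ marginal_is W Y1 W1 /\ marginal_is W Y2 W2.
Proof.
move=> posK trK [[s1 sW1] W1Y1] [[s2 sW2] W2Y2].
move=> /(marginal_isP _ _ sW1) M1 /(marginal_isP _ _ sW2) M2.
pose B := fiber W1 s1 (Y1 :&: Y2); pose C := fiber W2 s2 (Y1 :&: Y2).
have /ClassicalEpsilon.choice[D plans] : forall u, exists d : T -> T -> K,
    (forall r1, r1 \in B u -> \sum_(r2 <- C u) d r1 r2 = W1 r1) /\
    (forall r2, r2 \in C u -> \sum_(r1 <- B u) d r1 r2 = W2 r2).
  move=> u; apply: transport_seq; rewrite ?filter_uniq ?undup_uniq //.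
  by rewrite !sum_fiber -M1 -M2.
have uniq_fiber W s u : uniq (fiber W s (Y1 :&: Y2) u) by rewrite filter_uniq ?undup_uniq.
have memB u r : r \in B u -> [/\ r \in s1, restr (Y1 :&: Y2) r = u & is_tuple_over Y1 r].
  by move=> /mem_fiber[rs ru /W1Y1].
have memC u r : r \in C u -> [/\ r \in s2, restr (Y1 :&: Y2) r = u & is_tuple_over Y2 r].
  by move=> /mem_fiber[rs ru /W2Y2].
have suppB r : W1 r != 0 -> r \in B (restr (Y1 :&: Y2) r).
  by move=> W1r; rewrite mem_filter eqxx W1r mem_undup sW1.
have suppC r : W2 r != 0 -> r \in C (restr (Y1 :&: Y2) r).
  by move=> W2r; rewrite mem_filter eqxx W2r mem_undup sW2.
exists (glued Y1 Y2 B C D); split; last split.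
- split; first by eexists; apply: (@glued_supported _ _ B C D s1 s2) => u r /mem_fiber[].
  by move=> t /glued_neq0[].
- by apply: (glued_marginal memB memC (uniq_fiber W2 s2) suppB) => u r1 /(plans u).1.
- apply: (eq_marginal_isl (glued_sym Y1 Y2 B C D)).
  apply: (glued_marginal (s1 := s2) (s2 := s1) (B := C) (C := B) _ _ (uniq_fiber W1 s1));
    rewrite ?[Y2 :&: Y1]setIC //.
  by move=> u r2 /(plans u).2.
Qed.

End Gluing.

Section Forests.
Variable T : finType.
Implicit Types (f g : rel T) (a b x y : T).

Definition del_edge f a b : rel T :=
  fun x y => f x y && ~~ (((x == a) && (y == b)) || ((x == b) && (y == a))).

Definition add_edge f a b : rel T :=
  fun x y => [|| f x y, (x == a) && (y == b) | (x == b) && (y == a)].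

Definition induced f (P : pred T) : rel T := fun x y => [&& f x y, P x & P y].

Definition forest f :=
  [/\ symmetric f, irreflexive f & forall a b, f a b -> ~~ connect (del_edge f a b) a b].

Lemma connect_mono f g : subrel f g -> subrel (connect f) (connect g).
Proof. by move=> sfg; apply: connect_sub => x y /sfg; apply: connect1. Qed.

Lemma induced_sym f P : symmetric f -> symmetric (induced f P).
Proof. by move=> symf x y; rewrite /induced symf; congr (_ && _); apply: andbC. Qed.

Lemma induced_mono f g P : subrel f g -> subrel (induced f P) (induced g P).
Proof. by move=> fg x y /and3P[/fg gxy Px Py]; rewrite /induced gxy Px Py. Qed.

Lemma induced_del_edge f P a b : ~~ P a || ~~ P b -> subrel (induced f P) (del_edge f a b).
Proof.
move=> nPab x y /and3P[fxy Px Py]; rewrite /del_edge fxy /=.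
by apply/negP => /orP[] /andP[/eqP xa /eqP yb]; move: nPab; rewrite -xa -yb Px Py.
Qed.

Lemma connect_add_edge f a b x y : connect (add_edge f a b) x y ->
  [\/ connect f x y, connect f x a && connect f b y | connect f x b && connect f a y].
Proof.
move=> /connectP[p + ->]; elim: p x => [|z p IHp] x /=; first by rewrite connect0; constructor.
case/andP=> /or3P[fxz | /andP[/eqP-> /eqP->] | /andP[/eqP-> /eqP->]] /IHp.
- have cxz := connect1 fxz.
  case=> [c | /andP[c1 c2] | /andP[c1 c2]].
  + by apply: Or31; apply: connect_trans c.
  + by apply: Or32; rewrite (connect_trans cxz c1).
  + by apply: Or33; rewrite (connect_trans cxz c1).
- by case=> [c | /andP[_ c] | /andP[_ c]]; [apply: Or32 | apply: Or32 | apply: Or31];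
    rewrite ?connect0.
- by case=> [c | /andP[_ c] | /andP[_ c]]; [apply: Or33 | apply: Or31 | apply: Or33];
    rewrite ?connect0.
Qed.

(* An edge joining two components of a forest is a bridge, since any detour
   would already connect its endpoints in the old forest. *)
Lemma forest_add_edge f a b : forest f -> ~~ connect f a b -> forest (add_edge f a b).
Proof.
move=> [symf irrf bridgef] nab.
have sym_conn := sym_connect_sym symf.
have dsub x y : subrel (del_edge f x y) f by move=> u v /andP[].
have del_ab x y : (x == a) && (y == b) || (x == b) && (y == a) ->
    subrel (del_edge (add_edge f a b) x y) f.
  by move=> xy u v /andP[/or3P[// | H | H]]; case/orP: xy => /andP[/eqP-> /eqP->];
    rewrite H ?orbT.
split.
- move=> x y; rewrite /add_edge symf; congr (_ || _).
  by rewrite orbC [(y == b) && _]andbC [(y == a) && _]andbC.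
- move=> x; rewrite /add_edge irrf /=; apply/negP.
  by case/orP=> /andP[/eqP xa /eqP xb]; move: nab; rewrite -xa -xb connect0.
move=> x y /or3P[fxy | xy | xy]; last 2 first.
- by apply/negP => /(connect_mono (del_ab x y _)); rewrite xy => /(_ isT) xy_conn;
    case/andP: xy xy_conn => /eqP-> /eqP->; apply/negP.
- by apply/negP => /(connect_mono (del_ab x y _)); rewrite xy orbT => /(_ isT);
    case/andP: xy => /eqP-> /eqP->; rewrite sym_conn; apply/negP.
have sub : subrel (del_edge (add_edge f a b) x y) (add_edge (del_edge f x y) a b).
  by move=> u v /andP[/or3P[fuv | H | H] nd]; rewrite /add_edge ?H ?orbT // /del_edge fuv nd.
apply/negP => /(connect_mono sub)/connect_add_edge[c | /andP[c1 c2] | /andP[c1 c2]].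
- by move: (bridgef x y fxy); rewrite c.
- have ax : connect f a x by rewrite sym_conn (connect_mono (dsub x y) c1).
  have yb : connect f y b by rewrite sym_conn (connect_mono (dsub x y) c2).
  by rewrite (connect_trans (connect_trans ax (connect1 fxy)) yb) in nab.
- have yx : f y x by rewrite symf.
  have xb := connect_mono (dsub x y) c1; have ay := connect_mono (dsub x y) c2.
  by rewrite (connect_trans (connect_trans ay (connect1 yx)) xb) in nab.
Qed.

Lemma connect_exit f (S : {pred T}) x y : connect f x y -> x \in S -> y \notin S ->
  exists a b, [/\ f a b, a \in S & b \notin S].
Proof.
move=> /connectP[p + ->]; elim: p x => [|z p IHp] x /=; first by move=> _ ->.
case/andP=> fxz pz xS lastS; have [zS | zS] := boolP (z \in S); first exact: IHp pz zS lastS.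
by exists x, z.
Qed.

End Forests.

Lemma is_treeP m (e : rel 'I_m) : is_tree e <-> forest e /\ (forall i j, connect e i j).
Proof. by split=> [[? [? [? ?]]] | [[? ? ?] ?]]. Qed.

Section JoinTreeConsistency.
Variables (K : nmodType) (A : finType) (m : nat) (X : 'I_m -> {set A}) (e : rel 'I_m).
Hypotheses (posK : positive_monoid K) (trK : transportation_property K).
Hypothesis jtree : join_tree X e.
Variables (Dom : A -> eqType) (R : 'I_m -> tup Dom -> K).
Hypotheses (RX : forall i, Krel (X i) (R i)) (pcR : pairwise_consistent X R).

Definition subtree (S : {set 'I_m}) :=
  forall i j, i \in S -> j \in S -> connect (induced e [in S]) i j.

Definition consistent_on (S : {set 'I_m}) :=
  exists W : tup Dom -> K, Krel (\bigcup_(i in S) X i) W /\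
    forall i, i \in S -> marginal_is W (X i) (R i).

(* A vertex of X k lying in X i (i in S) but not in X j would give a path from j to k
   avoiding the edge jk: inside S to i, then along hyperedges containing the vertex. *)
Lemma running_intersection S j k : subtree S -> j \in S -> k \notin S -> e j k ->
  (\bigcup_(i in S) X i) :&: X k = X j :&: X k.
Proof.
move=> subS jS kS ejk; have [/is_treeP[[_ _ bridge] _] vconn] := jtree.
apply/setP => v; rewrite !inE; apply/andP/andP => -[vU vk]; split => //; last first.
  by apply/bigcupP; exists j.
have [i iS vi] := bigcupP vU; apply/negPn/negP => vj.
have inS := @induced_del_edge _ e [in S] j k (introT orP (or_intror kS)).
have onv := @induced_del_edge _ e (fun x => v \in X x) j k (introT orP (or_introl vj)).
move: (bridge j k ejk); apply/negP/negPn.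
exact: connect_trans (connect_mono inS (subS j i jS iS)) (connect_mono onv (vconn v i k vi vk)).
Qed.

Lemma subtree_add S j k : subtree S -> j \in S -> e j k -> subtree (k |: S).
Proof.
move=> subS jS ejk; have [/is_treeP[[syme _ _] _] _] := jtree.
have toj x : x \in k |: S -> connect (induced e [in k |: S]) x j.
  case/setU1P => [-> | xS]; first by apply: connect1; rewrite /induced syme ejk !inE eqxx jS orbT.
  apply: connect_mono (subS x j xS jS) => u v /and3P[euv uS vS].
  by rewrite /induced euv !inE uS vS !orbT.
move=> x y xS yS; rewrite (connect_trans (toj x xS)) //.
by rewrite (sym_connect_sym (induced_sym _ syme)) toj.
Qed.

Lemma pairwise_marginal i j :
  exists M, marginal_is (R i) (X i :&: X j) M /\ marginal_is (R j) (X i :&: X j) M.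
Proof.
have [W [WX [Wi Wj]]] := pcR i j; have [s sW] := Krel_supported WX.
have [M [_ RiM]] := marginal_exists (X i :&: X j) (RX i).
have [M' [_ RjM']] := marginal_exists (X i :&: X j) (RX j).
have WM := marginal_is_trans sW (subsetIl _ _) Wi RiM.
have WM' := marginal_is_trans sW (subsetIr _ _) Wj RjM'.
exists M; split=> //; apply: (eq_marginal_isr _ RjM').
exact: marginal_is_eq (ex_intro _ s sW) WM' WM.
Qed.

Lemma consistent_add S j k : subtree S -> consistent_on S -> j \in S -> k \notin S -> e j k ->
  consistent_on (k |: S).
Proof.
move=> subS [W [WX WR]] jS kS ejk; have [s sW] := Krel_supported WX.
have runint := running_intersection subS jS kS ejk.
have [M [RjM RkM]] := pairwise_marginal j k.
have WM : marginal_is W ((\bigcup_(i in S) X i) :&: X k) M.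
  by rewrite runint; apply: marginal_is_trans sW (subsetIl _ _) (WR j jS) RjM.
rewrite -runint in RkM.
have [W' [W'X [W'W W'k]]] := glue posK trK WX (RX k) WM RkM.
have [s' sW'] := Krel_supported W'X.
exists W'; split; first by rewrite big_setU1 //= setUC.
move=> i /setU1P[-> // | iS].
exact: marginal_is_trans sW' (bigcup_sup _ iS) W'W (WR i iS).
Qed.

Lemma consistent_on_setT S : S != set0 -> subtree S -> consistent_on S -> consistent_on setT.
Proof.
have [/is_treeP[_ conn] _] := jtree.
move cardS : #|~: S| => n; elim: n S cardS => [|n IHn] S cardS S0 subS consS.
  by move/eqP: cardS; rewrite cards_eq0 -setCT => /eqP/setC_inj <-.
have /set0Pn[i0 i0S] := S0.
have [k kS] : exists k, k \notin S.
  have /card_gt0P[k] : (0 < #|~: S|)%N by rewrite cardS.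
  by rewrite inE; exists k.
have [j [k' [ejk jS kS']]] := connect_exit (conn i0 k) i0S kS.
apply: (IHn (k' |: S)).
- move: cardS; rewrite (cardsD1 k') inE kS' add1n => -[<-].
  by apply: eq_card => x; rewrite !inE negb_or.
- by apply/set0Pn; exists k'; rewrite setU11.
- exact: subtree_add subS jS ejk.
- exact: consistent_add subS consS jS kS' ejk.
Qed.

Lemma join_tree_globally_consistent : globally_consistent X R.
Proof.
case: (posnP m) => [m0 | m_gt0].
  exists (fun _ => 0); split; last by move=> [i lt]; exfalso; move: lt; rewrite m0.
  by split=> [|t]; [exists [::] | ]; rewrite ?eqxx.
pose i0 := Ordinal m_gt0.
have [W [WX WR]] : consistent_on setT.
  apply: (@consistent_on_setT [set i0]); first by apply/set0Pn; exists i0; rewrite set11.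
    by move=> i j /set1P-> /set1P->; apply: connect0.
  exists (R i0); rewrite big_set1; split=> [|i /set1P->]; first exact: RX.
  exact: marginal_is_self.
exists W; split=> [|i]; last by apply: WR; rewrite inE.
by move: WX; congr Krel; apply: eq_bigl => i; rewrite inE.
Qed.

End JoinTreeConsistency.

Lemma join_tree_local_to_global (K : nmodType) (A : finType) m (X : 'I_m -> {set A}) e :
  positive_monoid K -> transportation_property K -> join_tree X e -> local_to_global K X.
Proof.
move=> posK trK jtree Dom R RX pcR.
exact: (join_tree_globally_consistent posK trK jtree RX pcR).
Qed.

Section GYOReduction.
Variables (A : finType) (m : nat) (X : 'I_m -> {set A}).
Implicit Types (S : {set 'I_m}) (V : {set A}) (f : rel 'I_m).

Local Notation vertex_rel f v := (induced f (fun i => v \in X i)).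

(* What GYO reduction cannot simplify: the hyperedges S restricted to the vertices V
   cover every hyperedge, are pairwise incomparable, and share every vertex of V. *)
Definition gyo_core S V :=
  [/\ (1 < #|S|)%N,
      forall j, exists2 k, k \in S & X j :&: V \subset X k :&: V,
      forall v, v \in V -> (1 < #|[set i in S | v \in X i]|)%N &
      forall i k, i \in S -> k \in S -> i != k -> ~~ (X i :&: V \subset X k :&: V)].

(* [f] is the part of a join tree built so far: a forest whose trees are rooted at the
   surviving hyperedges [S], in which every removed vertex is already connected. *)
Record gyo_invariant S V f : Prop := {
  gyo_forest : forest f;
  gyo_root : forall x, exists2 s, s \in S & connect f x s;
  gyo_root_uniq : forall s1 s2, s1 \in S -> s2 \in S -> connect f s1 s2 -> s1 = s2;
  gyo_live : forall v i, v \in V -> v \in X i ->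
    exists2 s, s \in S & (v \in X s) && connect (vertex_rel f v) i s;
  gyo_dead : forall v i j, v \notin V -> v \in X i -> v \in X j ->
    connect (vertex_rel f v) i j;
  gyo_cover : forall j, exists2 k, k \in S & X j :&: V \subset X k :&: V
}.

Lemma gyo_invariant_init : gyo_invariant setT setT (fun _ _ => false).
Proof.
split=> [||s1 s2 _ _ /connectP[[|? ?] //= _ ->] | v i _ vi | v i j | j] //.
- by move=> x; exists x; rewrite ?inE ?connect0.
- by exists i; rewrite ?inE // vi connect0.
- by rewrite inE.
- by exists j; rewrite ?inE.
Qed.

Lemma gyo_drop_vertex S V f v : gyo_invariant S V f -> v \in V ->
  (#|[set i in S | v \in X i]| <= 1)%N -> gyo_invariant S (V :\ v) f.
Proof.
move=> [forest_f root uniq_root live dead cover] vV /card_le1_eqP v_rare.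
have [symf _ _] := forest_f; split=> //.
- by move=> w i /setD1P[_ wV]; apply: live.
- move=> w i j; rewrite in_setD1 negb_and negbK => /orP[/eqP-> | wV] wi wj; last exact: dead.
  have [si siS /andP[vsi ci]] := live v i vV wi; have [sj sjS /andP[vsj cj]] := live v j vV wj.
  have esij : si = sj by apply: v_rare; rewrite inE ?siS ?sjS.
  rewrite -esij in cj.
  by rewrite (connect_trans ci) // (sym_connect_sym (induced_sym _ symf)).
- move=> j; have [k kS sub] := cover j; exists k => //.
  apply/subsetP => a /setIP[aj /setD1P[av aV]].
  have /setIP[ak _] : a \in X k :&: V by apply: (subsetP sub); rewrite inE aj aV.
  by rewrite !inE ak av aV.
Qed.

Lemma gyo_drop_edge S V f k k' : gyo_invariant S V f -> k \in S -> k' \in S -> k != k' ->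
  X k :&: V \subset X k' :&: V -> gyo_invariant (S :\ k) V (add_edge f k k').
Proof.
move=> [forest_f root uniq_root live dead cover] kS k'S kk' sub.
have fsub : subrel f (add_edge f k k') by move=> x y fxy; rewrite /add_edge fxy.
have k'S' : k' \in S :\ k by rewrite in_setD1 eq_sym kk' k'S.
have kk'_edge : add_edge f k k' k k' by rewrite /add_edge !eqxx orbT.
split.
- apply: forest_add_edge => //; apply/negP => /(uniq_root _ _ kS k'S) ekk'.
  by rewrite ekk' eqxx in kk'.
- move=> x; have [s sS xs] := root x; have xs' := connect_mono fsub xs.
  have [esk | nsk] := eqVneq s k; last by exists s; rewrite ?in_setD1 ?nsk.
  by exists k' => //; rewrite (connect_trans xs') // esk connect1.
- move=> s1 s2 /setD1P[n1 s1S] /setD1P[n2 s2S].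
  case/connect_add_edge=> [c | /andP[c1 _] | /andP[_ c2]]; first exact: uniq_root.
  + by rewrite (uniq_root _ _ s1S kS c1) eqxx in n1.
  + by rewrite -(uniq_root _ _ kS s2S c2) eqxx in n2.
- move=> v i vV vi; have [s sS /andP[vs c]] := live v i vV vi.
  have cv := connect_mono (induced_mono (P := fun i => v \in X i) fsub) c.
  have [esk | nsk] := eqVneq s k; last by exists s; rewrite ?in_setD1 ?nsk ?vs.
  have /setIP[vk' _] : v \in X k' :&: V by apply: (subsetP sub); rewrite inE -esk vs vV.
  exists k' => //; rewrite vk' (connect_trans cv) // connect1 //.
  by rewrite /induced esk kk'_edge -esk vs vk'.
- move=> v i j vV vi vj.
  exact: connect_mono (induced_mono (P := fun i => v \in X i) fsub) _ _ (dead v i j vV vi vj).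
- move=> j; have [k0 k0S sub0] := cover j.
  have [ek0 | nk0] := eqVneq k0 k; first by exists k' => //; apply: subset_trans sub; rewrite -ek0.
  by exists k0; rewrite ?in_setD1 ?nk0.
Qed.

Lemma gyo_invariant_acyclic S V f : gyo_invariant S V f -> (#|S| <= 1)%N -> acyclic X.
Proof.
move=> [forest_f root _ live dead _] /card_le1_eqP S1; have [symf _ _] := forest_f.
exists f; split.
  apply/is_treeP; split=> // i j.
  have [si siS ci] := root i; have [sj sjS cj] := root j.
  by rewrite (connect_trans ci) // -(S1 si sj siS sjS) (sym_connect_sym symf).
move=> v i j vi vj; have [vV | vV] := boolP (v \in V); last exact: dead.
have [si siS /andP[_ ci]] := live v i vV vi; have [sj sjS /andP[_ cj]] := live v j vV vj.
rewrite (connect_trans ci) // -(S1 si sj siS sjS).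
by rewrite (sym_connect_sym (induced_sym _ symf)).
Qed.

Lemma gyo_reduction n S V f : (#|S| + #|V| <= n)%N -> gyo_invariant S V f ->
  acyclic X \/ exists S V, gyo_core S V.
Proof.
elim: n S V f => [|n IHn] S V f size_le inv.
  left; apply: (gyo_invariant_acyclic inv).
  by move: size_le; rewrite leqn0 addn_eq0 => /andP[/eqP->].
have [/exists_inP[v vV v_rare] | no_rare] :=
  boolP [exists v in V, #|[set i in S | v \in X i]| <= 1]%N.
  apply: (IHn S (V :\ v) f); last exact: gyo_drop_vertex.
  by move: size_le; rewrite (cardsD1 v V) vV; lia.
have [/exists_inP[k kS /exists_inP[k' k'S /andP[kk' sub]]] | no_sub] :=
  boolP [exists k in S, exists k' in S, (k != k') && (X k :&: V \subset X k' :&: V)].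
  apply: (IHn (S :\ k) V (add_edge f k k')); last exact: gyo_drop_edge.
  by move: size_le; rewrite (cardsD1 k S) kS; lia.
have [S_le1 | S_gt1] := leqP #|S| 1; first by left; apply: gyo_invariant_acyclic inv S_le1.
right; exists S, V; split=> //; first exact: gyo_cover inv.
  by move=> v vV; rewrite ltnNge; apply: (exists_inPn no_rare).
move=> i k iS kS ik; apply: contraNN (exists_inPn no_sub i iS) => sub.
by apply/exists_inP; exists k; rewrite // ik.
Qed.

Lemma acyclic_or_gyo_core : acyclic X \/ exists S V, gyo_core S V.
Proof. exact: gyo_reduction (leqnn _) gyo_invariant_init. Qed.

End GYOReduction.

Section Pushforward.
Variables (A : finType) (Dom : A -> eqType) (K : nmodType) (G : finType).
Local Notation T := (tup Dom).

Definition push (F : G -> T) (w : G -> K) (t : T) : K := \sum_(g | F g == t) w g.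

Lemma push_neq0 F w t : push F w t != 0 -> exists g, F g = t.
Proof.
by case: (pickP (fun g => F g == t)) => [g /eqP | none]; [exists g | rewrite /push big_pred0 ?eqxx].
Qed.

Lemma push_supported F w : supported_on (push F w) (map F (enum G)).
Proof. by move=> t /push_neq0[g <-]; rewrite map_f ?mem_enum. Qed.

Lemma push_Krel X F w : (forall g, is_tuple_over X (F g)) -> Krel X (push F w).
Proof.
by move=> FX; split=> [|t /push_neq0[g <-]]; [eexists; apply: push_supported | apply: FX].
Qed.

Lemma marginal_is_push (F F' : G -> T) w (Y : {set A}) :
  (forall g, restr Y (F g) = F' g) -> marginal_is (push F w) Y (push F' w).
Proof.
move=> FF'; apply/(marginal_isP _ _ (@push_supported F w)) => t; rewrite /marg /push.
under [RHS]eq_bigr => r _ do rewrite big_mkcond.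
rewrite exchange_big /= [LHS]big_mkcond; apply: eq_bigr => g _.
have Fg : F g \in undup (map F (enum G)) by rewrite mem_undup map_f ?mem_enum.
rewrite big_mkcond (bigD1_seq (F g)) ?undup_uniq //= eqxx FF' big1 ?addr0 // => r /negPf neq.
by rewrite [F g == r]eq_sym neq !if_same.
Qed.

End Pushforward.

Section CoreCounterexample.
Variables (K : nmodType) (A : finType) (m : nat) (X : 'I_m -> {set A}).
Variables (S : {set 'I_m}) (V : {set A}) (p : K) (i0 : 'I_m).
Hypotheses (posK : positive_monoid K) (p_neq0 : p != 0).
Hypotheses (core : gyo_core X S V) (i0S : i0 \in S).
(* Every integer in [1, m] is invertible modulo m! + 1. *)
Local Notation q := (m`!).+1.
Local Notation Zq := 'Z_q.
Local Notation G := {ffun A -> Zq}.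
Implicit Types (Y : {set A}) (g : G).

Definition core_degree v := #|[set i in S | v \in X i]|.

(* On each vertex of [V], one hyperedge of [S] containing it gets coefficient
   [1 - degree] and the others get [1], so the coefficients over [S] sum to zero. *)
Definition core_coef (i : 'I_m) (v : A) : Zq :=
  if [&& v \in V, i \in S & v \in X i] then
    if [pick j in S | v \in X j] == Some i then - (core_degree v).-1%:R else 1
  else 0.

Definition core_form (i : 'I_m) (g : G) : Zq := \sum_v core_coef i v * g v.

Lemma core_coef_out i v : v \notin X i -> core_coef i v = 0.
Proof. by rewrite /core_coef => /negbTE->; rewrite !andbF. Qed.

Lemma core_coef_unit i v : i \in S -> v \in X i -> v \in V -> core_coef i v \is a GRing.unit.
Proof.
move=> iS vi vV; rewrite /core_coef vV iS vi /=; case: ifP => _; last exact: unitr1.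
rewrite unitrN unitZpE ?ltnS ?fact_gt0 //.
have [_ _ shared _] := core; have deg_gt1 := shared v vV.
have deg_le : (core_degree v <= m)%N by rewrite -[m in (_ <= m)%N]card_ord max_card.
apply: (coprime_dvdr (dvdn_fact _)) (coprimeSn _).
by rewrite /core_degree in deg_gt1 deg_le *; lia.
Qed.

Lemma sum_core_coef v : \sum_(i in S) core_coef i v = 0.
Proof.
have [vV | vV] := boolP (v \in V); last by rewrite big1 // => i _; rewrite /core_coef (negbTE vV).
have [_ _ shared _] := core; have deg_gt1 := shared v vV.
rewrite (bigID (fun i => v \in X i)) /= [X in _ + X]big1 ?addr0; last first.
  by move=> i /andP[_ /negbTE vi]; rewrite /core_coef vi !andbF.
case pick_v: [pick j in S | v \in X j] => [i1 | ]; last first.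
  move: pick_v deg_gt1; case: pickP => // none _.
  suff -> : [set i in S | v \in X i] = set0 by rewrite cards0.
  by apply/setP => i; rewrite !inE none.
have /andP[i1S vi1] : (i1 \in S) && (v \in X i1) by move: pick_v; case: pickP => // x Px [<-].
rewrite (bigD1 i1) ?i1S ?vi1 // {1}/core_coef vV i1S vi1 pick_v eqxx /=.
rewrite (eq_bigr (fun _ => 1)) => [|i /andP[/andP[iS vi] ii1]]; last first.
  by rewrite /core_coef vV iS vi pick_v /=; case: eqP => // -[ei]; rewrite ei eqxx in ii1.
rewrite sumr_const addrC.
suff -> : #|[pred i | (i \in S) && (v \in X i) && (i != i1)]| = (core_degree v).-1 by rewrite subrr.
rewrite /core_degree (cardsD1 i1) inE i1S vi1 /=.
by apply: eq_card => i; rewrite !inE andbC.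
Qed.

Definition shift (v0 : A) (d : Zq) (g : G) : G := [ffun v => if v == v0 then g v + d else g v].

Lemma shift_inj v0 d : injective (shift v0 d).
Proof.
move=> g1 g2 /ffunP eq12; apply/ffunP => v; have := eq12 v; rewrite !ffunE.
by case: ifP => // _ /addIr.
Qed.

Lemma core_form_shift i v0 d g : core_form i (shift v0 d g) = core_form i g + core_coef i v0 * d.
Proof.
rewrite /core_form (eq_bigr (fun v =>
  core_coef i v * g v + (if v == v0 then core_coef i v * d else 0))).
  by rewrite big_split /= -big_mkcond big_pred1_eq.
by move=> v _; rewrite ffunE; case: ifP; rewrite ?mulrDr ?addr0.
Qed.

Lemma card_Zq : #|{: Zq}| = q.
Proof. by rewrite card_ord Zp_cast // ltnS fact_gt0. Qed.

Definition zq_dom : A -> eqType := fun=> Zq.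

Definition proj (Y : {set A}) (g : G) : tup zq_dom :=
  [ffun a => if a \in Y then Some (g a) else None].

Lemma proj_tuple_over Y g : is_tuple_over Y (proj Y g).
Proof. by move=> a; rewrite ffunE; case: (a \in Y). Qed.

Lemma restr_proj (Y Y' : {set A}) g : Y \subset Y' -> restr Y (proj Y' g) = proj Y g.
Proof. by move=> sYY'; apply/ffunP => a; rewrite !ffunE; case: ifP => // /(subsetP sYY') ->. Qed.

Lemma proj_shift Y v0 d g : v0 \notin Y -> proj Y (shift v0 d g) = proj Y g.
Proof.
move=> v0Y; apply/ffunP => a; rewrite !ffunE; case: ifP => // aY.
by case: eqP => // av0; rewrite -av0 aY in v0Y.
Qed.

(* Shifting [g] at [v0] runs [core_form i g] through all of [Zq] without changing
   [proj Y g], so every value of the form is taken equally often on a fiber of [proj Y]. *)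
Lemma card_core_form_fiber i v0 Y t c : i \in S -> v0 \in X i :&: V -> v0 \notin Y ->
  (#|[set g : G | (proj Y g == t) && (core_form i g == c)]| * q)%N =
  #|[set g : G | proj Y g == t]|.
Proof.
move=> iS /setIP[v0i v0V] v0Y.
pose P c := [set g : G | (proj Y g == t) && (core_form i g == c)].
have unit_v0 := core_coef_unit iS v0i v0V.
have le_P c1 c2 : (#|P c1| <= #|P c2|)%N.
  pose d := (c2 - c1) / core_coef i v0.
  rewrite -(card_imset (P c1) (@shift_inj v0 d)); apply: subset_leq_card.
  apply/subsetP => _ /imsetP[g + ->]; rewrite !inE => /andP[gt /eqP gc1].
  by rewrite proj_shift // gt core_form_shift gc1 /d mulrC divrK // addrC subrK /=.
rewrite -[RHS]sum1_card (partition_big (core_form i) xpredT) //=.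
rewrite (eq_bigr (fun _ => #|P c|)) => [|c' _]; first by rewrite sum_nat_const card_Zq mulnC.
have -> : #|P c| = #|P c'| by apply/eqP; rewrite eqn_leq !le_P.
by rewrite -sum1_card; apply: eq_bigl => g; rewrite !inE.
Qed.

Definition core_target (k : 'I_m) : Zq := (k == i0)%:R.

Definition core_weight k g : K := if core_form k g == core_target k then p else 0.

Definition core_rep j :=
  if j \in S then j else odflt i0 [pick k in S | X j :&: V \subset X k :&: V].

Definition core_rel j := push (proj (X j)) (core_weight (core_rep j)).

Lemma core_rep_id k : k \in S -> core_rep k = k.
Proof. by rewrite /core_rep => ->. Qed.

Lemma core_rep_spec j : core_rep j \in S /\ X j :&: V \subset X (core_rep j) :&: V.
Proof.
rewrite /core_rep; case: ifP => // _; case: pickP => [k /andP[] // | none].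
by have [_ cover _ _] := core; have [k kS sub] := cover j; move: (none k); rewrite kS sub.
Qed.

Lemma core_rel_Krel j : Krel (X j) (core_rel j).
Proof. exact/push_Krel/proj_tuple_over. Qed.

Lemma push_core_weight (F : G -> tup zq_dom) k t : push F (core_weight k) t =
  p *+ #|[set g | (F g == t) && (core_form k g == core_target k)]|.
Proof.
rewrite -sumr_const /push [LHS]big_mkcond [RHS]big_mkcond; apply: eq_bigr => g _.
by rewrite inE /core_weight; case: (F g == t); case: (_ == _).
Qed.

Lemma core_vertex i k : i \in S -> k \in S -> i != k -> exists2 v, v \in X i :&: V & v \notin X k.
Proof.
move=> iS kS ik; have [_ _ _ incomparable] := core.
have /subsetPn[v viV vkV] := incomparable i k iS kS ik.
by exists v => //; apply: contra vkV => vk; case/setIP: viV => _ vV; rewrite inE vk.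
Qed.

(* Each side is [p] times a [1/q] fraction of the extensions of [t]: the hyperedge of [S]
   covering one of [X j], [X j'] has a vertex of [V] outside the other one. *)
Lemma core_marginal_agree j j' :
  push (proj (X j :&: X j')) (core_weight (core_rep j)) =1
  push (proj (X j :&: X j')) (core_weight (core_rep j')).
Proof.
move=> t; have [kS subk] := core_rep_spec j; have [k'S subk'] := core_rep_spec j'.
set k := core_rep j in kS subk *; set k' := core_rep j' in k'S subk' *.
have [-> // | kk'] := eqVneq k k'.
have notin_sub (Y Y' : {set A}) u : Y :&: V \subset Y' :&: V -> u \in V -> u \notin Y' ->
    u \notin Y.
  move=> sub uV; apply: contra => uY.
  by have /setIP[] : u \in Y' :&: V by apply: (subsetP sub); rewrite inE uY uV.
have k'k : k' != k by rewrite eq_sym.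
have [v vkV vk'] := core_vertex kS k'S kk'; have /setIP[_ vV] := vkV.
have [v' vk'V v'k] := core_vertex k'S kS k'k; have /setIP[_ v'V] := vk'V.
have vZ : v \notin X j :&: X j' by rewrite inE negb_and (notin_sub _ _ _ subk' vV vk') orbT.
have v'Z : v' \notin X j :&: X j' by rewrite inE negb_and (notin_sub _ _ _ subk v'V v'k).
rewrite !push_core_weight; congr (_ *+ _); apply/eqP.
rewrite -(eqn_pmul2r (ltn0Sn m`!)).
by rewrite (card_core_form_fiber _ _ kS vkV vZ) (card_core_form_fiber _ _ k'S vk'V v'Z).
Qed.

Lemma core_rel_pairwise_consistent : transportation_property K -> pairwise_consistent X core_rel.
Proof.
move=> trK j j'.
have margin l : X j :&: X j' \subset X l -> marginal_is (core_rel l) (X j :&: X j')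
    (push (proj (X j :&: X j')) (core_weight (core_rep l))).
  by move=> sub; apply: marginal_is_push => g; apply: restr_proj.
apply: glue posK trK (core_rel_Krel j) (core_rel_Krel j') (margin j (subsetIl _ _)) _.
exact: eq_marginal_isr (fsym (core_marginal_agree j j')) (margin j' (subsetIr _ _)).
Qed.

Lemma core_form_solvable i c : i \in S -> exists g, core_form i g = c.
Proof.
move=> iS; have [S_gt1 _ _ _] := core.
move: S_gt1; rewrite (cardsD1 i) iS add1n ltnS => /card_gt0P[k /setD1P[ki kS]].
rewrite eq_sym in ki; have [v viV _] := core_vertex iS kS ki; have /setIP[vi vV] := viV.
exists (shift v (c / core_coef i v) 0).
rewrite core_form_shift mulrC divrK ?core_coef_unit // /core_form big1 ?add0r // => u _.
by rewrite ffunE mulr0.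
Qed.

Lemma core_form_proj i g g' : proj (X i) g = proj (X i) g' -> core_form i g = core_form i g'.
Proof.
move=> eq_proj; apply: eq_bigr => v _.
have [vi | vi] := boolP (v \in X i); last by rewrite core_coef_out // !mul0r.
by have := congr1 (fun t : tup zq_dom => t v) eq_proj; rewrite !ffunE vi => -[->].
Qed.

Lemma sum_core_form g : \sum_(i in S) core_form i g = 0.
Proof. by rewrite exchange_big big1 // => v _; rewrite -mulr_suml sum_core_coef mul0r. Qed.

Lemma core_rel_neq0 i t : i \in S -> core_rel i t != 0 ->
  exists g, proj (X i) g = t /\ core_form i g = core_target i.
Proof.
move=> iS; rewrite /core_rel core_rep_id // push_core_weight => nz.
have /card_gt0P[g] : (0 < #|[set g | (proj (X i) g == t) && (core_form i g == core_target i)]|)%N.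
  by rewrite lt0n; apply: contraNneq nz => ->; rewrite mulr0n.
by rewrite inE => /andP[/eqP ? /eqP ?]; exists g.
Qed.

Lemma core_rel_solution_neq0 i g : i \in S -> core_form i g = core_target i ->
  core_rel i (proj (X i) g) != 0.
Proof.
move=> iS gi; rewrite /core_rel core_rep_id // push_core_weight.
apply/eqP => /(positive_natmul_eq0 posK p_neq0)/eqP; rewrite cards_eq0 => /eqP empty.
by have := in_set0 g; rewrite -empty inE eqxx gi eqxx.
Qed.

Lemma core_rel_not_globally_consistent : ~ globally_consistent X core_rel.
Proof.
move=> [W [[[s sW] WX] WR]]; have Wmarg i := (marginal_isP _ _ sW).1 (WR i).
have [g0 g0i0] := core_form_solvable (core_target i0) i0S.
have := core_rel_solution_neq0 i0S g0i0; rewrite Wmarg => /big_neq0_witness[r rs /andP[_ Wr]].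
pose gr : G := [ffun v => odflt 0 (r v)].
have gr_target i : i \in S -> core_form i gr = core_target i.
  move=> iS; have /core_rel_neq0[// | g [g_proj <-]] : core_rel i (restr (X i) r) != 0.
    rewrite Wmarg /marg; apply: contra Wr => /eqP/(positive_sum_eq0 posK) r0.
    by rewrite (r0 r rs (eqxx _)).
  apply: core_form_proj; rewrite g_proj; apply/ffunP => v; rewrite !ffunE.
  case: ifP => // vi; have : r v != None by rewrite (WX r Wr); apply/bigcupP; exists i.
  by case: (r v).
have := sum_core_form gr; rewrite (eq_bigr _ gr_target) (bigD1 i0) //= /core_target eqxx.
rewrite big1 => [|i /andP[_ /negbTE->] //].
by rewrite addr0 => /eqP; rewrite oner_eq0.
Qed.

End CoreCounterexample.

Lemma gyo_core_not_local_to_global (K : nmodType) (A : finType) m (X : 'I_m -> {set A}) S V :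
  nontrivial_monoid K -> positive_monoid K -> transportation_property K ->
  gyo_core X S V -> ~ local_to_global K X.
Proof.
move=> [p p_neq0] posK trK core l2g.
have [S_gt1 _ _ _] := core; have /card_gt0P[i0 i0S] := ltnW S_gt1.
apply: (core_rel_not_globally_consistent posK p_neq0 core i0S).
by apply: l2g => [j | ]; [exact: core_rel_Krel | exact: core_rel_pairwise_consistent].
Qed.

Theorem corollary18 (K : nmodType) :
  nontrivial_monoid K -> positive_monoid K -> transportation_property K ->
  forall (A : finType) (m : nat) (X : 'I_m -> {set A}),
    acyclic X <-> local_to_global K X.
Proof.
move=> ntK posK trK A m X; split=> [[e jtree] | l2g].
  exact: join_tree_local_to_global posK trK jtree.
have [// | [S [V core]]] := acyclic_or_gyo_core X.
by case: (gyo_core_not_local_to_global ntK posK trK core l2g).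
Qed.
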